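(* For any RES-graph $(G,\gamma,b)$, the maximum number of non-zero circuits in a flooding of $(G,\gamma,b)$ equals $\tilde{\nu}(G,\gamma,b)$.
   Context: Graphs are finite and may have loops and multiple edges. Each edge consists of two half-edges; each half-edge is incident to a vertex, and a loop contributes $2$ to the degree of its vertex. An arc is an ordered pair $(h_1,h_2)$ of half-edges forming an edge; its tail is the vertex of $h_1$ and its head is the vertex of $h_2$. A trail is a sequence of arcs whose edges are pairwise distinct and such that the head of each arc (other than the last) is the tail of the next. Its tail and head are the tail of its first arc and the head of its last arc. A circuit is a trail whose head equals its tail. A circuit hits $v$ if it contains an arc incident to $v$. A circuit-decomposition of $G$ is a collection of circuits using every edge of $G$ exactly once. A graph is Eulerian if it is connected and every vertex has even degree. A signature is a function $\gamma:E(G)\to\mathbb{Z}_2$. The weight of a trail is the $\mathbb{Z}_2$-sum of $\gamma$ over its edges, and a trail is zero or non-zero accordingly. An RES-graph is a triple $(G,\gamma,b)$ where $G$ is an Eulerian graph, $\gamma$ is a signature of $G$, and $b\in V(G)$. The flooding number $\tilde{\nu}(G,\gamma,b)$ is the maximum size of a circuit-decomposition in which every circuit is non-zero and hits $b$; it is $0$ if none exists. A flooding of $(G,\gamma,b)$ is a circuit-decomposition of $G$ of size $\deg(b)/2$ in which every circuit has $b$ as its tail and its head. *)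

From mathcomp Require Import all_boot.
From mathcomp Require Import boolp.

Set Implicit Arguments.
Unset Strict Implicit.
Unset Printing Implicit Defensive.

(* A finite graph with loops and multiple edges:
   vertices V, edges E, and each edge e has two half-edges (e,false),(e,true);
   [ends e d] is the vertex the half-edge (e,d) is incident to.
   An arc is a pair (e,d) : E * bool, i.e. the ordered pair of half-edges
   ((e,d),(e,~~d)); its tail is [ends e d] and its head [ends e (~~ d)].
   A signature is gamma : E -> bool (bool = Z_2, sum = addb). *)

Section RES.
Variables (V E : finType) (ends : E -> bool -> V).

Definition arc := (E * bool)%type.
Definition arc_tail (a : arc) : V := ends a.1 a.2.
Definition arc_head (a : arc) : V := ends a.1 (~~ a.2).

(* degree: number of half-edges incident to v (a loop contributes 2) *)
Definition deg (v : V) : nat := #|[set h : E * bool | ends h.1 h.2 == v]|.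

Definition adj : rel V :=
  fun u v => [exists e : E, [exists d : bool, (ends e d == u) && (ends e (~~ d) == v)]].

Definition connected_graph : Prop := forall u v : V, connect adj u v.

Definition eulerian : Prop := connected_graph /\ forall v : V, ~~ odd (deg v).

Definition trail (t : seq arc) : bool :=
  match t with
  | [::] => false
  | a :: s => path (fun x y => arc_head x == arc_tail y) a s && uniq (map fst t)
  end.

Definition circuit (t : seq arc) : bool :=
  match t with
  | [::] => false
  | a :: s => trail t && (arc_head (last a s) == arc_tail a)
  end.

Definition tail_is (v : V) (t : seq arc) : bool :=
  match t with
  | [::] => false
  | a :: _ => arc_tail a == v
  end.

Definition hits (v : V) (t : seq arc) : bool :=
  has (fun a => (arc_tail a == v) || (arc_head a == v)) t.

Definition weight (gamma : E -> bool) (t : seq arc) : bool :=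
  foldr (fun a acc => gamma a.1 (+) acc) false t.

Definition nonzero (gamma : E -> bool) (t : seq arc) : bool := weight gamma t.

Definition circuit_decomposition (D : seq (seq arc)) : Prop :=
  all circuit D /\
  forall e : E, count (pred1 e) (flatten (map (map fst) D)) = 1.

(* flooding number: max size of a circuit-decomposition all of whose circuits
   are non-zero and hit b; 0 if none exists.  Every circuit is nonempty with
   pairwise distinct edges, so such sizes are bounded by #|E|. *)
Definition flooding_number (gamma : E -> bool) (b : V) : nat :=
  \max_(k < #|E|.+1 | `[< exists D : seq (seq arc),
        [/\ circuit_decomposition D, all (nonzero gamma) D,
            all (hits b) D & size D = k] >]) k.

Definition flooding (b : V) (D : seq (seq arc)) : Prop :=
  [/\ circuit_decomposition D, size D = (deg b)./2 & all (tail_is b) D].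

End RES.

From mathcomp Require Import all_boot boolp.

Set Implicit Arguments.
Unset Strict Implicit.
Unset Printing Implicit Defensive.

(* Upper bound.  In a flooding F every circuit is a closed walk at b.  Gluing
   each zero circuit to a neighbour (weights add up modulo 2) leaves closed
   walks at b that are all nonzero, at least as many as the nonzero circuits
   of F; with pairwise distinct edges they form a circuit decomposition into
   nonzero circuits through b, so count nonzero F <= flooding number.

   Lower bound.  Take a decomposition D into nonzero circuits through b of
   maximal size.  Rotate each circuit to start at b, concatenate them into an
   Euler tour and cut this tour after every return to b: the pieces form a
   flooding (there are deg(b)/2 returns), and each circuit of D, being
   nonzero, is cut into pieces at least one of which is nonzero.

   If no such decomposition exists, the flooding number is 0 and any flooding
   will do; one is obtained by cutting an Euler tour at b, whose existence is
   Euler's theorem, proved here through a longest trail. *)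

Section Flooding.
Variables (V E : finType) (ends : E -> bool -> V).

Local Notation tl := (arc_tail ends).
Local Notation hd := (arc_head ends).
Local Notation arc := (E * bool)%type.

Definition linked : rel arc := fun x y => hd x == tl y.

Lemma tails_heads a s : path linked a s -> map tl s = map hd (belast a s).
Proof. by elim: s a => [|y s IH] a //= /andP[/eqP-> /IH->]. Qed.

Lemma closed_walk_balanced a s : path linked a s -> hd (last a s) = tl a ->
  perm_eq (map tl (a :: s)) (map hd (a :: s)).
Proof.
move=> walk_s closed_s.
have -> : map hd (a :: s) = rcons (map hd (belast a s)) (hd (last a s)).
  by rewrite lastI map_rcons.
rewrite /= (tails_heads walk_s) closed_s.
by rewrite perm_sym perm_rcons.
Qed.

Lemma circuitE C : circuit ends C = [&& C != [::], cycle linked C & uniq (map fst C)].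
Proof.
case: C => //= a s; rewrite rcons_path /linked.
by case: (path _ a s); rewrite //= andbC.
Qed.

Lemma circuit_trail C : circuit ends C -> trail ends C.
Proof. by case: C => // a s /andP[]. Qed.

Lemma circuit_rot i C : circuit ends C -> circuit ends (rot i C).
Proof. by rewrite !circuitE -!size_eq0 size_rot rot_cycle map_rot rot_uniq. Qed.

(* Heads of a circuit are tails: a circuit hitting [v] leaves [v]. *)
Lemma circuit_leaves v C : circuit ends C -> hits ends v C -> has (fun a => tl a == v) C.
Proof.
case: C => // a s /andP[/andP[walk_s _] /eqP closed_s] /hasP[x x_in /orP[tl_x|hd_x]].
  by apply/hasP; exists x.
have : v \in map hd (a :: s) by rewrite -(eqP hd_x) map_f.
rewrite -(perm_mem (closed_walk_balanced walk_s closed_s)) => /mapP[y y_in ->].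
by apply/hasP; exists y.
Qed.

Definition closed_walk (v : V) (s : seq arc) : bool :=
  if s is a :: s' then [&& tl a == v, path linked a s' & hd (last a s') == v] else false.

Lemma closed_walk_cat v p q :
  closed_walk v p -> closed_walk v q -> closed_walk v (p ++ q).
Proof.
case: p => // a p; case: q => // c q /= /and3P[tl_a walk_p hd_p] /and3P[tl_c walk_q hd_q].
by rewrite tl_a cat_path walk_p last_cat /= walk_q hd_q /linked (eqP hd_p) (eqP tl_c) eqxx.
Qed.

Lemma closed_walk_circuit v C :
  closed_walk v C -> uniq (map fst C) -> circuit ends C && tail_is ends v C.
Proof.
case: C => // a s /and3P[tl_a walk_s hd_s] uniq_s.
by rewrite /circuit /trail /tail_is walk_s uniq_s (eqP hd_s) (eqP tl_a) eqxx.
Qed.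

Lemma circuit_closed_walk v C :
  circuit ends C -> tail_is ends v C -> closed_walk v C.
Proof.
case: C => // a s /andP[/andP[walk_s _] closed_s] /= tl_a.
by rewrite tl_a walk_s -(eqP tl_a).
Qed.

Definition rot_at (v : V) (C : seq arc) := rot (find (fun a => tl a == v) C) C.

Lemma rot_at_circuit v C : circuit ends C -> has (fun a => tl a == v) C ->
  circuit ends (rot_at v C) && tail_is ends v (rot_at v C).
Proof.
case: C => // a s circ_C leaves_v; rewrite circuit_rot //=.
have i_lt := leaves_v; rewrite has_find in i_lt.
by rewrite /rot_at /rot (drop_nth a i_lt) /= (nth_find a leaves_v).
Qed.

Definition returns_to (v : V) (s : seq arc) : bool :=
  if s is a :: s' then hd (last a s') == v else true.

Fixpoint cut_at (v : V) (s : seq arc) : seq (seq arc) :=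
  match s with
  | [::] => [::]
  | a :: s' => if hd a == v then [:: a] :: cut_at v s'
               else match cut_at v s' with
                    | [::] => [:: [:: a]]
                    | p :: ps => (a :: p) :: ps
                    end
  end.

Lemma cut_at_cons v a s : cut_at v (a :: s) =
  if hd a == v then [:: a] :: cut_at v s
  else if cut_at v s is p :: ps then (a :: p) :: ps else [:: [:: a]].
Proof. by []. Qed.

Lemma flatten_cut_at v s : flatten (cut_at v s) = s.
Proof.
elim: s => //= a s IH; case: ifP => _ /=; first by rewrite IH.
by move: IH; case: (cut_at v s) => [|p ps] /= <-.
Qed.

Lemma cut_at_nil v s : (cut_at v s == [::]) = (s == [::]).
Proof. by apply/eqP/eqP => [cut0|-> //]; rewrite -(flatten_cut_at v s) cut0. Qed.

Lemma cut_at_cat v p q : returns_to v p -> cut_at v (p ++ q) = cut_at v p ++ cut_at v q.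
Proof.
elim: p => // a p IH end_p /=.
case: p IH end_p => [|c p] IH end_p; first by rewrite /= in end_p; rewrite end_p.
rewrite IH //; case: ifP => // _.
have : cut_at v (c :: p) != [::] by rewrite cut_at_nil.
by case: (cut_at v (c :: p)).
Qed.

Lemma size_cut_at v s : returns_to v s -> size (cut_at v s) = count (fun a => hd a == v) s.
Proof.
elim: s => // a s IH end_s /=.
have {}IH : size (cut_at v s) = count (fun a => hd a == v) s.
  by apply: IH; case: s end_s.
case: ifP => hd_a /=; first by rewrite IH.
case: s IH end_s => [|c s] IH end_s; first by rewrite /= hd_a in end_s.
have : cut_at v (c :: s) != [::] by rewrite cut_at_nil.
by case: (cut_at v (c :: s)) IH => // p ps IH _ /=; rewrite IH.
Qed.

Lemma cut_at_walk v a s : path linked a s -> hd (last a s) == v ->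
  exists p ps, [/\ cut_at v (a :: s) = (a :: p) :: ps, path linked a p,
                   hd (last a p) == v & all (closed_walk v) ps].
Proof.
elim: s a => [|c s IH] a; first by move=> _ hd_a; exists [::], [::]; rewrite /= hd_a.
move=> /andP[link_ac walk_s] end_s.
have [p [ps [cut_s walk_p end_p closed_ps]]] := IH c walk_s end_s.
rewrite cut_at_cons cut_s; case: ifP => hd_a.
  exists [::], ((c :: p) :: ps); split => //=.
  by rewrite closed_ps walk_p end_p -(eqP link_ac) hd_a.
by exists (c :: p), ps; split => //=; rewrite link_ac walk_p.
Qed.

Lemma cut_at_closed_walk v s : closed_walk v s -> all (closed_walk v) (cut_at v s).
Proof.
case: s => // a s /and3P[tl_a walk_s end_s].
have [p [ps [-> walk_p end_p closed_ps]]] := cut_at_walk walk_s end_s.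
by rewrite /= tl_a walk_p end_p closed_ps.
Qed.

Definition half_deg (u : V) (e : E) : nat := (ends e true == u) + (ends e false == u).

Lemma deg_sum u : deg ends u = \sum_(e : E) half_deg u e.
Proof.
rewrite /deg cardsE -sum1_card big_mkcond /=.
rewrite -(pair_bigA _ (fun e d => if ends e d == u then 1 else 0)) /=.
by apply: eq_bigr => e _; rewrite big_bool /half_deg; case: ifP; case: ifP.
Qed.

Lemma sum_half_deg u (T : seq arc) :
  \sum_(x <- T) half_deg u x.1 = count (fun x => tl x == u) T + count (fun x => hd x == u) T.
Proof.
elim: T => [|[e d] T IH]; first by rewrite big_nil.
rewrite big_cons IH /half_deg /arc_tail /arc_head /=.
case: d => /=; first by rewrite [in LHS]addnACA.
by rewrite [in RHS]addnACA (addnC (ends e false == u)).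
Qed.

Definition euler_tour (W : seq arc) : Prop := forall e : E, count_mem e (map fst W) = 1.

Lemma euler_tour_perm W : euler_tour W -> perm_eq (map fst W) (index_enum E).
Proof.
move=> tour_W; apply/allP => e _ /=.
by rewrite tour_W count_uniq_mem ?index_enum_uniq ?mem_index_enum.
Qed.

Lemma euler_tour_uniq W : euler_tour W -> uniq (map fst W).
Proof. by move=> /euler_tour_perm/perm_uniq->; exact: index_enum_uniq. Qed.

Lemma euler_tour_deg u W : euler_tour W ->
  deg ends u = count (fun a => tl a == u) W + count (fun a => hd a == u) W.
Proof.
by move=> /euler_tour_perm tour_W; rewrite deg_sum -(perm_big _ tour_W) big_map sum_half_deg.
Qed.

Lemma closed_walk_count v u W : closed_walk v W ->
  count (fun a => tl a == u) W = count (fun a => hd a == u) W.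
Proof.
case: W => // a s /and3P[tl_a walk_s hd_s].
have := permP (closed_walk_balanced walk_s (etrans (eqP hd_s) (esym (eqP tl_a)))) (pred1 u).
by rewrite !count_map.
Qed.

Lemma uniq_flatten_mem (T : eqType) (L : seq (seq T)) p :
  uniq (flatten L) -> p \in L -> uniq p.
Proof.
elim: L => //= q L IH; rewrite cat_uniq inE => /and3P[uniq_q _ uniq_L] /orP[/eqP-> //|].
exact: IH.
Qed.

Lemma closed_walks_decomposition v D : all (closed_walk v) D -> euler_tour (flatten D) ->
  circuit_decomposition ends D /\ all (tail_is ends v) D.
Proof.
move=> closed_D tour_D.
have circ_D p : p \in D -> circuit ends p && tail_is ends v p.
  move=> p_in; apply: closed_walk_circuit; first exact: (allP closed_D).
  apply: (@uniq_flatten_mem _ (map (map fst) D)); last exact: map_f.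
  by rewrite -map_flatten euler_tour_uniq.
split; first split.
- by apply/allP => p /circ_D /andP[].
- by move=> e; rewrite -map_flatten.
by apply/allP => p /circ_D /andP[].
Qed.

Lemma euler_tour_flooding v W : (W == [::]) || closed_walk v W -> euler_tour W ->
  flooding ends v (cut_at v W).
Proof.
move=> closed_W tour_W.
have closed_cut : all (closed_walk v) (cut_at v W).
  by case/orP: closed_W => [/eqP-> //|]; exact: cut_at_closed_walk.
have [decomp tails] : circuit_decomposition ends (cut_at v W) /\
                      all (tail_is ends v) (cut_at v W).
  by apply: closed_walks_decomposition; rewrite ?flatten_cut_at.
have end_W : returns_to v W.
  by case/orP: closed_W => [/eqP-> //|]; case: (W) => // a s /and3P[].
have count_W : count (fun a => tl a == v) W = count (fun a => hd a == v) W.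
  by case/orP: closed_W => [/eqP-> //|]; exact: closed_walk_count.
split => //; rewrite size_cut_at //.
by rewrite (euler_tour_deg v tour_W) count_W addnn doubleK.
Qed.

Lemma euler_tour_rot i W : euler_tour W -> euler_tour (rot i W).
Proof. by move=> tour_W e; rewrite map_rot -(tour_W e); apply/permP; rewrite perm_rot. Qed.

Lemma trail_size T : trail ends T -> size T <= #|E|.
Proof.
case: T => // a s /andP[_ uniq_T].
by rewrite -(size_map fst (a :: s)) -(card_uniqP uniq_T) max_card.
Qed.

Lemma trail_rcons T x e d : trail ends T -> e \notin map fst T ->
  ends e d = hd (last x T) -> trail ends (rcons T (e, d)).
Proof.
case: T => // a s /andP[walk_s uniq_s] fresh_e end_e /=.
rewrite rcons_path walk_s /= /arc_tail /= end_e eqxx /=.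
by rewrite -cons_uniq map_rcons -rcons_cons rcons_uniq; apply/andP.
Qed.

Definition longest_trail (T : seq arc) : Prop :=
  trail ends T /\ forall T', trail ends T' -> size T' <= size T.

Lemma longest_trail_exists (e0 : E) : exists T, longest_trail T.
Proof.
pose P n := `[< exists T, trail ends T /\ size T = n >].
have exP : exists n, P n by exists 1; apply/asboolP; exists [:: (e0, false)].
have ubP n : P n -> n <= #|E| by move=> /asboolP[T [trail_T <-]]; exact: trail_size.
case: (ex_maxnP exP ubP) => n /asboolP[T [trail_T size_T]] max_n.
exists T; split => // T' trail_T'; rewrite size_T; apply: max_n.
by apply/asboolP; exists T'.
Qed.

Lemma longest_trail_stuck T x e d : longest_trail T -> e \notin map fst T ->
  ends e d != hd (last x T).
Proof.
move=> [trail_T longest] fresh_e; apply/eqP => end_e.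
by have := longest _ (trail_rcons trail_T fresh_e end_e); rewrite size_rcons ltnn.
Qed.

Lemma open_walk_odd a s u : path linked a s -> hd (last a s) = u -> tl a != u ->
  odd (count (fun x => tl x == u) (a :: s) + count (fun x => hd x == u) (a :: s)).
Proof.
move=> walk_s end_s open_s.
rewrite -(count_map tl (pred1 u)) -(count_map hd (pred1 u)).
have -> : map hd (a :: s) = rcons (map hd (belast a s)) u by rewrite lastI map_rcons end_s.
rewrite map_cons (tails_heads walk_s) -cats1 count_cat /= eqxx (negPf open_s).
by rewrite add0n addnA addnn addn1 /= odd_double.
Qed.

Lemma unused_edge_at T u : uniq (map fst T) -> ~~ odd (deg ends u) ->
  odd (count (fun x => tl x == u) T + count (fun x => hd x == u) T) ->
  exists e d, e \notin map fst T /\ ends e d = u.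
Proof.
move=> uniq_T even_u odd_T.
rewrite deg_sum (bigID (mem (map fst T))) /= -big_uniq // big_map sum_half_deg in even_u.
rewrite oddD odd_T /= negbK in even_u.
have : \sum_(e | e \notin map fst T) half_deg u e != 0 by apply: contraTneq even_u => ->.
rewrite sum_nat_eq0 negb_forall => /existsP[e]; rewrite negb_imply => /andP[fresh_e].
rewrite /half_deg; have [end_e _|_] := eqVneq (ends e true) u; first by exists e, true.
by have [end_e _|_] := eqVneq (ends e false) u; first by exists e, false.
Qed.

Lemma longest_trail_closed T : (forall v, ~~ odd (deg ends v)) -> longest_trail T ->
  circuit ends T.
Proof.
case: T => [|a s] even longest; first by case: longest.
have trail_T := longest.1.
have /andP[walk_s uniq_s] := trail_T; rewrite /circuit trail_T /=.
apply/negPn/negP; rewrite eq_sym => open_s.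
have [e [d [fresh_e end_e]]] := unused_edge_at uniq_s (even _) (open_walk_odd walk_s erefl open_s).
by have := longest_trail_stuck a d longest fresh_e; rewrite end_e eqxx.
Qed.

Lemma longest_circuit_stuck C v f d : longest_trail C -> circuit ends C ->
  tail_is ends v C -> f \notin map fst C -> ends f d != v.
Proof.
case: C => // a s longest /andP[_ /eqP closed_C] /eqP tail_C fresh_f.
by have := longest_trail_stuck a d longest fresh_f; rewrite /= closed_C tail_C.
Qed.

(* Hence no unused edge is incident to a vertex that a longest closed trail
   leaves: rotate the trail to start there and append the edge. *)
Lemma longest_circuit_isolated C f d : longest_trail C -> circuit ends C ->
  f \notin map fst C -> ~~ has (fun x => tl x == ends f d) C.
Proof.
move=> [_ longest] circ_C fresh_f; apply/negP => leaves.
have /andP[circ_R tail_R] := rot_at_circuit circ_C leaves.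
have longest_R : longest_trail (rot_at (ends f d) C).
  by split; [exact: circuit_trail | move=> T' /longest; rewrite size_rot].
have fresh_R : f \notin map fst (rot_at (ends f d) C) by rewrite map_rot mem_rot.
by have := longest_circuit_stuck d longest_R circ_R tail_R fresh_R; rewrite eqxx.
Qed.

(* In a connected graph, a longest closed trail leaves every vertex: the set
   of vertices it leaves is closed under adjacency. *)
Lemma longest_circuit_visits v C : connected_graph ends -> longest_trail C ->
  circuit ends C -> has (fun x => tl x == v) C.
Proof.
move=> conn longest circ_C; pose S := [pred u | has (fun x => tl x == u) C].
have heads_S x : x \in C -> hd x \in S.
  by move=> x_in; apply: circuit_leaves circ_C _; apply/hasP; exists x; rewrite ?eqxx ?orbT.
have used_S e d : e \in map fst C -> ends e d \in S.
  case/mapP=> [[e' d'] x_in ->]; have := heads_S _ x_in.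
  have : tl (e', d') \in S by apply/hasP; exists (e', d').
  by rewrite /arc_tail /arc_head /=; case: d; case: (d').
have closed_S : closed (adj ends) S.
  move=> x y /existsP[e /existsP[d /andP[/eqP<- /eqP<-]]].
  have [/used_S in_S|fresh_e] := boolP (e \in map fst C); first by rewrite !in_S.
  by rewrite !inE !(negPf (longest_circuit_isolated _ longest circ_C fresh_e)).
have [a a_in] : exists a, a \in C by case: (C) circ_C => // a s _; exists a; rewrite mem_head.
rewrite -[has _ C]/(v \in S) -(closed_connect closed_S (conn (tl a) v)).
by apply/hasP; exists a.
Qed.

Lemma longest_circuit_euler_tour C : connected_graph ends -> longest_trail C ->
  circuit ends C -> euler_tour C.
Proof.
move=> conn longest circ_C e; move: (circ_C); rewrite circuitE => /and3P[_ _ uniq_C].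
rewrite count_uniq_mem //; case: (boolP (e \in _)) => // fresh_e.
have := longest_circuit_isolated false longest circ_C fresh_e.
by rewrite longest_circuit_visits.
Qed.

Theorem euler_tour_exists v : eulerian ends ->
  exists W, ((W == [::]) || closed_walk v W) /\ euler_tour W.
Proof.
case=> conn even.
have [e0 _|no_edge] := pickP (@predT E); last by exists [::]; split => // e; have := no_edge e.
have [C longest] := longest_trail_exists e0.
have circ_C := longest_trail_closed even longest.
have /andP[circ_R tail_R] := rot_at_circuit circ_C (longest_circuit_visits v conn longest circ_C).
exists (rot_at v C); split; first by rewrite circuit_closed_walk ?orbT.
exact/euler_tour_rot/longest_circuit_euler_tour.
Qed.

Lemma decomposition_euler_tour D : circuit_decomposition ends D -> euler_tour (flatten D).
Proof. by case=> _ cnt_D e; rewrite map_flatten. Qed.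

Lemma decomposition_size D : circuit_decomposition ends D -> size D <= #|E|.
Proof.
move=> decomp_D; apply: (@leq_trans (size (map fst (flatten D)))).
  rewrite size_map; case: decomp_D => + _.
  elim: D => //= p D IH /andP[circ_p /IH]; rewrite size_cat.
  by case: p circ_p => // a p _ /= le_D; rewrite addSn ltnS (leq_trans le_D) ?leq_addl.
have uniq_D := euler_tour_uniq (decomposition_euler_tour decomp_D).
by rewrite -(card_uniqP uniq_D) max_card.
Qed.

Lemma tail_is_hits v C : tail_is ends v C -> hits ends v C.
Proof. by case: C => //= a C ->. Qed.

Variable gamma : E -> bool.
Local Notation nz := (nonzero gamma).

Lemma nonzero_cat p q : nz (p ++ q) = nz p (+) nz q.
Proof. by elim: p => //= a p IH; rewrite /nonzero /= -/(nz (p ++ q)) IH addbA. Qed.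

Lemma nonzero_flatten L : nz (flatten L) = odd (count nz L).
Proof. by elim: L => //= p L IH; rewrite nonzero_cat IH oddD oddb. Qed.

Lemma nonzero_rot i C : nz (rot i C) = nz C.
Proof. by rewrite /rot nonzero_cat addbC -nonzero_cat cat_take_drop. Qed.

Fixpoint absorb_zero (L : seq (seq arc)) : seq (seq arc) :=
  match L with
  | [::] => [::]
  | p :: ps => match absorb_zero ps with
               | [::] => [:: p]
               | q :: rs => if nz q && nz p then p :: q :: rs else (p ++ q) :: rs
               end
  end.

Lemma flatten_absorb_zero L : flatten (absorb_zero L) = flatten L.
Proof.
elim: L => //= p L; case: (absorb_zero L) => [|q rs] /= <-; first by rewrite cats0.
by case: ifP => //=; rewrite catA.
Qed.

Lemma absorb_zero_head L : nz (head [::] (absorb_zero L)) = has nz L.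
Proof.
elim: L => //= p L; case: (absorb_zero L) => [|q rs] /= <-; first by rewrite orbF.
by case: ifP => [/andP[_ ->] //|]; rewrite /= nonzero_cat; case: (nz q); case: (nz p).
Qed.

Lemma absorb_zero_behead L : all nz (behead (absorb_zero L)).
Proof.
elim: L => //= p L; case: (absorb_zero L) => [|q rs] //= all_rs.
by case: ifP => [/andP[nz_q _]|] //=; rewrite nz_q.
Qed.

Lemma absorb_zero_nonzero L : has nz L -> all nz (absorb_zero L).
Proof.
move=> nz_L; have := absorb_zero_head L; have := absorb_zero_behead L.
by rewrite nz_L; case: (absorb_zero L) => //= q rs -> ->.
Qed.

(* No nonzero walk is lost: each one starts its own piece. *)
Lemma count_nonzero_le_absorb L : count nz L <= size (absorb_zero L).
Proof.
elim: L => //= p L; have := absorb_zero_head L.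
case: (absorb_zero L) => [|q rs] /= nz_head IH.
  by move: IH; rewrite leqn0 => /eqP->; case: (nz p).
case: ifP => [/andP[_ ->] //|]; rewrite nz_head.
case: (nz p) => //=; rewrite andbT has_count.
by case: (count nz L).
Qed.

Lemma absorb_zero_closed_walk v L :
  all (closed_walk v) L -> all (closed_walk v) (absorb_zero L).
Proof.
elim: L => //= p L IH /andP[closed_p /IH]; case: (absorb_zero L) => [|q rs] /=.
  by rewrite closed_p.
case/andP=> closed_q closed_rs; case: ifP => _ /=.
  by rewrite closed_p closed_q closed_rs.
by rewrite closed_walk_cat.
Qed.

Lemma bigmax_attained n (P : pred 'I_n) :
  \max_(k | P k) (k : nat) = 0 \/ exists2 k : 'I_n, P k & \max_(k | P k) (k : nat) = k.
Proof.
have [k Pk|P0] := pickP P; [right | by left; apply: big_pred0].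
exists [arg max_(i > k | P i) (i : nat)]; first by case: arg_maxnP.
exact: bigmax_eq_arg.
Qed.

Lemma flooding_number_ge b D : circuit_decomposition ends D -> all nz D ->
  all (hits ends b) D -> size D <= flooding_number ends gamma b.
Proof.
move=> decomp_D nz_D hits_D.
have lt_D : size D < #|E|.+1 by rewrite ltnS decomposition_size.
rewrite /flooding_number; apply: (@bigmax_sup _ (Ordinal lt_D)) => //=.
by apply: asboolT; exists D; split.
Qed.

Lemma flooding_number_attained b : flooding_number ends gamma b = 0 \/
  exists D, [/\ circuit_decomposition ends D, all nz D, all (hits ends b) D
              & size D = flooding_number ends gamma b].
Proof.
rewrite /flooding_number.
case: (bigmax_attained (fun k : 'I_#|E|.+1 => `[< exists D, [/\ circuit_decomposition ends D,
    all nz D, all (hits ends b) D & size D = k] >])) => [-> | [k /asboolP[D]]]; first by left.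
by case=> decomp_D nz_D hits_D size_D ->; right; exists D.
Qed.

(* Upper bound: gluing the zero circuits of a flooding to nonzero neighbours
   gives a decomposition into nonzero closed walks at [b]. *)
Lemma flooding_count_le b F : flooding ends b F -> count nz F <= flooding_number ends gamma b.
Proof.
case=> decomp_F _ tails_F.
have [nz_F|] := boolP (has nz F); last by rewrite has_count lt0n negbK => /eqP->.
have closed_F : all (closed_walk b) F.
  apply/allP => p p_in; apply: circuit_closed_walk; last exact: (allP tails_F).
  exact: (allP decomp_F.1).
have tour_F := decomposition_euler_tour decomp_F; rewrite -flatten_absorb_zero in tour_F.
have [decomp tails] := closed_walks_decomposition (absorb_zero_closed_walk closed_F) tour_F.
apply: leq_trans (count_nonzero_le_absorb F) (flooding_number_ge decomp _ _).
  exact: absorb_zero_nonzero.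
by apply/allP => p /(allP tails)/tail_is_hits.
Qed.

Lemma closed_walk_flatten v L : all (closed_walk v) L ->
  (flatten L == [::]) || closed_walk v (flatten L).
Proof.
elim: L => //= p L IH /andP[closed_p /IH /orP[/eqP->|closed_L]].
  by rewrite cats0 closed_p orbT.
by rewrite closed_walk_cat ?orbT.
Qed.

Lemma cut_at_flatten v L : all (closed_walk v) L ->
  cut_at v (flatten L) = flatten (map (cut_at v) L).
Proof.
elim: L => //= p L IH /andP[closed_p closed_L]; rewrite cut_at_cat ?IH //.
by case: p closed_p => // a p /and3P[].
Qed.

(* Cutting a nonzero walk produces a nonzero piece, by additivity of weight. *)
Lemma cut_at_nonzero v s : nz s -> has nz (cut_at v s).
Proof. by rewrite -{1}(flatten_cut_at v s) nonzero_flatten has_count; case: count. Qed.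

Lemma size_le_count_cut v L : all nz L -> size L <= count nz (flatten (map (cut_at v) L)).
Proof.
elim: L => //= p L IH /andP[nz_p /IH le_L].
by rewrite count_cat -add1n leq_add // -has_count cut_at_nonzero.
Qed.

Lemma rot_at_euler_tour v D : circuit_decomposition ends D ->
  euler_tour (flatten (map (rot_at v) D)).
Proof.
case=> _ cnt_D e; rewrite -(cnt_D e) map_flatten !count_flatten -!map_comp.
by congr sumn; apply: eq_map => C /=; rewrite map_rot; apply/permP; rewrite perm_rot.
Qed.

(* Lower bound: rotate each circuit of [D] to start at [b], concatenate them
   into an Euler tour and cut it at [b]; every circuit of [D] contributes a
   nonzero piece to the resulting flooding. *)
Lemma flooding_from_decomposition b D : circuit_decomposition ends D -> all nz D ->
  all (hits ends b) D -> exists F, flooding ends b F /\ size D <= count nz F.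
Proof.
move=> decomp_D nz_D hits_D; set L := map (rot_at b) D.
have closed_L : all (closed_walk b) L.
  apply/allP => _ /mapP[C C_in ->].
  have circ_C := allP decomp_D.1 C C_in.
  have leaves_b := circuit_leaves circ_C (allP hits_D C C_in).
  have /andP[circ_rot tail_rot] := rot_at_circuit circ_C leaves_b.
  exact: circuit_closed_walk.
exists (cut_at b (flatten L)); split.
  exact: euler_tour_flooding (closed_walk_flatten closed_L) (rot_at_euler_tour b decomp_D).
have nz_L : all nz L by rewrite all_map; apply: sub_all nz_D => C; rewrite /= nonzero_rot.
by rewrite cut_at_flatten // -(size_map (rot_at b)) size_le_count_cut.
Qed.

End Flooding.

Theorem mainTheorem3 (V E : finType) (ends : E -> bool -> V)
    (gamma : E -> bool) (b : V) :
  eulerian ends ->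
  (exists F : seq (seq (E * bool)), flooding ends b F /\
      count (nonzero gamma) F = flooding_number ends gamma b) /\
  (forall F : seq (seq (E * bool)), flooding ends b F ->
      count (nonzero gamma) F <= flooding_number ends gamma b).
Proof.
move=> eulerian_G; split; last exact: flooding_count_le.
have [fn0|[D [decomp_D nz_D hits_D size_D]]] := flooding_number_attained ends gamma b.
- have [W [closed_W tour_W]] := euler_tour_exists b eulerian_G.
  have flood := euler_tour_flooding closed_W tour_W.
  exists (cut_at ends b W); split => //.
  by apply/eqP; rewrite fn0 -leqn0 -fn0 flooding_count_le.
- have [F [flood_F le_F]] := flooding_from_decomposition decomp_D nz_D hits_D.
  exists F; split => //.
  by apply/eqP; rewrite eqn_leq flooding_count_le // -size_D.
Qed.
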